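(* Let $\mathcal{P}=\{1,\dots,p\}$, let $M(1),\dots,M(p)\in\mathbb{R}^{n\times n}$ be exponentially stable (Hurwitz) matrices, and let $N\in\mathbb{R}^{n\times n}$ be a fixed matrix. Let $\tau_D>0$, $N_0>0$ and $\lambda>0$. Then there exists $g_0>0$ such that for every $g\ge g_0$ there is a constant $c>0$ such that, for every switching signal $\sigma\in\mathcal{S}_{ave}(\tau_D,N_0)$ and every initial condition, the solution of $\dot x=\big(N+gM(\sigma(t))\big)x$ satisfies $\|x(t)\|\le c\,e^{-\lambda t}\|x(0)\|$ for all $t\ge0$.
   Context: A switching signal is a piecewise-constant, right-continuous map $\sigma:[0,\infty)\to\mathcal{P}$ with finitely many discontinuities on each bounded interval. For $t\ge t_0\ge0$, $N_\sigma(t_0,t)$ is the number of discontinuities of $\sigma$ in the open interval $(t_0,t)$, and $\mathcal{S}_{ave}(\tau_D,N_0)$ is the set of switching signals with $N_\sigma(t_0,t)\le N_0+\frac{t-t_0}{\tau_D}$ for all $t\ge t_0\ge0$. $\|\cdot\|$ is any vector norm (with induced matrix norm). *)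

(* classical reals. Vectors in R^n are functions nat -> R
   (components 0..n-1), n x n matrices are functions nat -> nat -> R. *)
From Stdlib Require Import Reals Lra List.
Import ListNotations.
Open Scope R_scope.

(* the 1-norm on R^n (any norm works, all norms are equivalent) *)
Definition vnorm (n : nat) (v : nat -> R) : R :=
  fold_right Rplus 0 (map (fun i => Rabs (v i)) (seq 0 n)).

Definition mat_vec (n : nat) (A : nat -> nat -> R) (v : nat -> R) (i : nat) : R :=
  fold_right Rplus 0 (map (fun j => A i j * v j) (seq 0 n)).

Definition right_deriv (f : R -> R) (t l : R) : Prop :=
  forall eps, 0 < eps -> exists delta, 0 < delta /\
    forall h, 0 < h < delta -> Rabs ((f (t + h) - f t) / h - l) < eps.

(* x is a solution on [0,oo) of xdot = A(t) x, where A(t) is piecewise constant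
   and right-continuous: x is continuous on [0,oo) and its right derivative
   at every t >= 0 equals A(t) x(t). *)
Definition is_solution (n : nat) (A : R -> nat -> nat -> R) (x : R -> nat -> R) : Prop :=
  forall i, (i < n)%nat ->
    (forall t, 0 < t -> continuity_pt (fun s => x s i) t) /\
    (forall t, 0 <= t -> right_deriv (fun s => x s i) t (mat_vec n (A t) (x t) i)).

Definition exp_stable (n : nat) (A : nat -> nat -> R) : Prop :=
  exists c a, 0 < c /\ 0 < a /\
    forall x, is_solution n (fun _ => A) x ->
      forall t, 0 <= t -> vnorm n (x t) <= c * exp (- (a * t)) * vnorm n (x 0).

(* switching signal with values in P = {1,...,p}: piecewise constant,
   right-continuous, finitely many discontinuities on bounded intervals
   (equivalently: locally constant to the right of every t >= 0, and
   locally constant to the left of every t > 0). *)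
Definition switching_signal (p : nat) (sigma : R -> nat) : Prop :=
  (forall t, 0 <= t -> (1 <= sigma t <= p)%nat) /\
  (forall t, 0 <= t -> exists eps, 0 < eps /\
      forall u, t <= u < t + eps -> sigma u = sigma t) /\
  (forall t, 0 < t -> exists eps, 0 < eps /\ exists k,
      forall u, t - eps < u < t -> sigma u = k).

Definition discont (sigma : R -> nat) (s : R) : Prop :=
  ~ (exists eps, 0 < eps /\ forall u, Rabs (u - s) < eps -> sigma u = sigma s).

(* sigma in S_ave(tauD, N0): N_sigma(t0,t) <= N0 + (t - t0)/tauD,
   where N_sigma(t0,t) = number of discontinuities in (t0,t); stated as: every
   finite family of distinct discontinuities in (t0,t) has at most that size. *)
Definition in_Save (tauD N0 : R) (sigma : R -> nat) : Prop :=
  forall t0 t, 0 <= t0 -> t0 <= t ->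
    forall l : list R, NoDup l ->
      (forall s, In s l -> t0 < s < t /\ discont sigma s) ->
      INR (length l) <= N0 + (t - t0) / tauD.

(* For a Hurwitz mode [M k] with [|e^(t M k)| <= C e^(-a t)], the function
   [V_k v = sup_(s >= 0) e^(a s) |e^(s M k) v|] satisfies [|v| <= V_k v <= C |v|], is
   [C]-Lipschitz, and decays like [e^(-a t)] along the flow of [M k]. Along
   [x' = (N + g M k) x] its upper right Dini derivative is therefore at most
   [-(a g - C |N|) V_k], while at a switch [V] jumps by at most a factor [C]. The average
   dwell time bounds the number of switches in [(0, t]] by [N0 + (t + 1) / tauD], so the
   solution decays at rate [a g - C |N| - ln C / tauD], which exceeds [lam] for large [g]. *)

From Stdlib Require Import Reals Lra Lia List Classical.
From Coquelicot Require Import Coquelicot.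
Open Scope R_scope.

Definition lsum (l : list nat) (f : nat -> R) : R := fold_right Rplus 0 (map f l).

Lemma lsum_plus l f g : lsum l (fun i => f i + g i) = lsum l f + lsum l g.
Proof. induction l as [|a l IH]; unfold lsum in *; simpl; [lra|]. rewrite IH; lra. Qed.

Lemma lsum_scal l c f : lsum l (fun i => c * f i) = c * lsum l f.
Proof. induction l as [|a l IH]; unfold lsum in *; simpl; [lra|]. rewrite IH; lra. Qed.

Lemma lsum_le l f g : (forall i, In i l -> f i <= g i) -> lsum l f <= lsum l g.
Proof.
  induction l as [|a l IH]; unfold lsum in *; simpl; intros H; [lra|].
  pose proof (H a (or_introl eq_refl)).
  assert (fold_right Rplus 0 (map f l) <= fold_right Rplus 0 (map g l)) by (apply IH; auto).
  lra.
Qed.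

Lemma lsum_ext l f g : (forall i, In i l -> f i = g i) -> lsum l f = lsum l g.
Proof. intros H; apply Rle_antisym; apply lsum_le; intros i Hi; rewrite (H i Hi); lra. Qed.

Lemma lsum_abs l f : Rabs (lsum l f) <= lsum l (fun i => Rabs (f i)).
Proof.
  induction l as [|a l IH]; unfold lsum in *; simpl; [rewrite Rabs_R0; lra|].
  eapply Rle_trans; [apply Rabs_triang|]. lra.
Qed.

Lemma lsum_const l c : lsum l (fun _ => c) = INR (length l) * c.
Proof.
  induction l as [|a l IH]; unfold lsum in *; simpl; [lra|].
  rewrite IH. destruct (length l); simpl; lra.
Qed.

Lemma lsum_nonneg l f : (forall i, In i l -> 0 <= f i) -> 0 <= lsum l f.
Proof.
  intros H. rewrite <- (Rmult_0_r (INR (length l))), <- lsum_const. now apply lsum_le.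
Qed.

Lemma lsum_elem l f j : (forall i, In i l -> 0 <= f i) -> In j l -> f j <= lsum l f.
Proof.
  induction l as [|a l IH]; simpl; intros H Hj; [contradiction|]. unfold lsum in *; simpl.
  pose proof (H a (or_introl eq_refl)).
  assert (0 <= fold_right Rplus 0 (map f l)) by (apply lsum_nonneg; auto).
  destruct Hj as [<-|Hj]; [lra|].
  assert (f j <= fold_right Rplus 0 (map f l)) by (apply IH; auto). lra.
Qed.

Lemma in_seq0 i n : In i (seq 0 n) <-> (i < n)%nat.
Proof. rewrite in_seq; lia. Qed.

Lemma vnorm_lsum n v : vnorm n v = lsum (seq 0 n) (fun i => Rabs (v i)).
Proof. reflexivity. Qed.

Lemma mat_vec_lsum n A v i : mat_vec n A v i = lsum (seq 0 n) (fun j => A i j * v j).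
Proof. reflexivity. Qed.

Lemma vnorm_nonneg n v : 0 <= vnorm n v.
Proof. rewrite vnorm_lsum. apply lsum_nonneg; intros; apply Rabs_pos. Qed.

Lemma vnorm_ext n v w : (forall i, (i < n)%nat -> v i = w i) -> vnorm n v = vnorm n w.
Proof.
  intros H; rewrite !vnorm_lsum; apply lsum_ext; intros i Hi.
  rewrite H; [auto|apply in_seq0; auto].
Qed.

Lemma Rabs_le_vnorm n v i : (i < n)%nat -> Rabs (v i) <= vnorm n v.
Proof.
  intros H; rewrite vnorm_lsum. apply (lsum_elem _ (fun i => Rabs (v i))).
  - intros; apply Rabs_pos.
  - apply in_seq0; auto.
Qed.

Lemma vnorm_triang n v w : vnorm n (fun i => v i + w i) <= vnorm n v + vnorm n w.
Proof. rewrite !vnorm_lsum, <- lsum_plus. apply lsum_le; intros; apply Rabs_triang. Qed.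

Lemma vnorm_le_plus_minus n v w : vnorm n v <= vnorm n w + vnorm n (fun i => v i - w i).
Proof.
  eapply Rle_trans; [|apply (vnorm_triang n w (fun i => v i - w i))].
  right. apply vnorm_ext; intros; ring.
Qed.

Lemma vnorm_scal n c v : vnorm n (fun i => c * v i) = Rabs c * vnorm n v.
Proof. rewrite !vnorm_lsum, <- lsum_scal. apply lsum_ext; intros; apply Rabs_mult. Qed.

Lemma vnorm_minus_sym n v w : vnorm n (fun i => v i - w i) = vnorm n (fun i => w i - v i).
Proof.
  rewrite <- (Rmult_1_l (vnorm n (fun i => w i - v i))), <- Rabs_R1, <- Rabs_Ropp.
  rewrite <- vnorm_scal. apply vnorm_ext; intros; ring.
Qed.

Lemma vnorm_le_componentwise n v e :
  (forall i, (i < n)%nat -> Rabs (v i) <= e) -> vnorm n v <= INR n * e.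
Proof.
  intros H. rewrite vnorm_lsum. rewrite <- (length_seq n 0) at 2. rewrite <- lsum_const.
  apply lsum_le; intros i Hi; apply H, in_seq0; auto.
Qed.

Definition mnorm n (A : nat -> nat -> R) : R :=
  lsum (seq 0 n) (fun i => lsum (seq 0 n) (fun j => Rabs (A i j))).

Lemma mnorm_nonneg n A : 0 <= mnorm n A.
Proof. apply lsum_nonneg; intros; apply lsum_nonneg; intros; apply Rabs_pos. Qed.

Lemma vnorm_mat_vec_le n A v : vnorm n (mat_vec n A v) <= mnorm n A * vnorm n v.
Proof.
  rewrite vnorm_lsum. unfold mnorm. rewrite Rmult_comm, <- lsum_scal.
  apply lsum_le; intros i Hi. rewrite mat_vec_lsum. eapply Rle_trans; [apply lsum_abs|].
  rewrite <- lsum_scal. apply lsum_le; intros j Hj. rewrite Rabs_mult, (Rmult_comm (vnorm n v)).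
  apply Rmult_le_compat_l; [apply Rabs_pos|]. apply Rabs_le_vnorm, in_seq0; auto.
Qed.

Lemma mat_vec_ext n A v w i :
  (forall j, (j < n)%nat -> v j = w j) -> mat_vec n A v i = mat_vec n A w i.
Proof.
  intros H; rewrite !mat_vec_lsum; apply lsum_ext; intros j Hj.
  rewrite H; [auto|apply in_seq0; auto].
Qed.

Lemma mat_vec_minus n A v w i :
  mat_vec n A (fun j => v j - w j) i = mat_vec n A v i - mat_vec n A w i.
Proof.
  rewrite !mat_vec_lsum. unfold Rminus.
  rewrite <- (Rmult_1_l (lsum _ (fun j => A i j * w j))), Ropp_mult_distr_l, <- lsum_scal, <- lsum_plus.
  apply lsum_ext; intros; ring.
Qed.

Lemma mat_vec_plus_scal n N M g v i :
  mat_vec n (fun i j => N i j + g * M i j) v i = mat_vec n N v i + g * mat_vec n M v i.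
Proof. rewrite !mat_vec_lsum, <- lsum_scal, <- lsum_plus. apply lsum_ext; intros; ring. Qed.

Lemma common_delta n (P : nat -> R -> Prop) :
  (forall i d d', 0 < d' <= d -> P i d -> P i d') ->
  (forall i, (i < n)%nat -> exists d, 0 < d /\ P i d) ->
  exists d, 0 < d /\ forall i, (i < n)%nat -> P i d.
Proof.
  intros Hmono. induction n as [|n IH]; intros H.
  - exists 1; split; [lra|intros; lia].
  - destruct IH as [d1 [Hd1 H1]]; [intros; apply H; lia|].
    destruct (H n) as [d2 [Hd2 H2]]; [lia|].
    pose proof (Rmin_l d1 d2); pose proof (Rmin_r d1 d2); pose proof (Rmin_pos d1 d2 Hd1 Hd2).
    exists (Rmin d1 d2); split; [auto|]. intros i Hi. destruct (Nat.eq_dec i n) as [->|].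
    + apply (Hmono _ d2); [lra|auto].
    + apply (Hmono _ d1); [lra|apply H1; lia].
Qed.

Fixpoint mat_pow_vec n (A : nat -> nat -> R) k (v : nat -> R) : nat -> R :=
  match k with O => v | S k => mat_vec n A (mat_pow_vec n A k v) end.

Lemma vnorm_mat_pow_vec_le n A k v :
  vnorm n (mat_pow_vec n A k v) <= mnorm n A ^ k * vnorm n v.
Proof.
  induction k as [|k IH]; simpl; [lra|].
  eapply Rle_trans; [apply vnorm_mat_vec_le|]. rewrite Rmult_assoc.
  apply Rmult_le_compat_l; [apply mnorm_nonneg|auto].
Qed.

(* The i-th component of [exp (t A) v] is the power series with these coefficients. *)
Definition exp_series_coef n A v i k := mat_pow_vec n A k v i / INR (Factorial.fact k).

Lemma pow_div_fact_le_exp y k : 0 <= y -> y ^ k / INR (Factorial.fact k) <= exp y.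
Proof.
  intros Hy. eapply Rle_trans; [|apply (exp_ge_taylor y k Hy)].
  destruct k as [|k]; simpl; [lra|].
  assert (0 <= sum_f_R0 (fun m => y ^ m / INR (Factorial.fact m)) k).
  { apply cond_pos_sum. intros m. apply Rdiv_le_0_compat; [apply pow_le; auto|apply INR_fact_lt_0]. }
  lra.
Qed.

Lemma exp_series_coef_radius n A v i :
  (i < n)%nat -> forall t, Rbar_lt (Rabs t) (CV_radius (exp_series_coef n A v i)).
Proof.
  intros Hi t. set (r := Rabs t + 1). pose proof (Rabs_pos t).
  apply Rbar_lt_le_trans with r; [simpl; unfold r; lra|].
  apply (proj1 (CV_radius_bounded _)).
  exists (vnorm n v * exp (mnorm n A * r)). intros k.
  unfold exp_series_coef, Rdiv. rewrite !Rabs_mult, <- RPow_abs, (Rabs_right r) by (unfold r; lra).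
  rewrite (Rabs_right (/ _)) by (left; apply Rinv_0_lt_compat, INR_fact_lt_0).
  apply Rle_trans with (vnorm n v * ((mnorm n A * r) ^ k / INR (Factorial.fact k))).
  - rewrite Rpow_mult_distr.
    replace (vnorm n v * (mnorm n A ^ k * r ^ k / INR (Factorial.fact k)))
      with (mnorm n A ^ k * vnorm n v * / INR (Factorial.fact k) * r ^ k) by (field; apply INR_fact_neq_0).
    apply Rmult_le_compat_r; [apply pow_le; unfold r; lra|].
    apply Rmult_le_compat_r; [left; apply Rinv_0_lt_compat, INR_fact_lt_0|].
    eapply Rle_trans; [apply Rabs_le_vnorm; eauto|apply vnorm_mat_pow_vec_le].
  - apply Rmult_le_compat_l; [apply vnorm_nonneg|].
    apply pow_div_fact_le_exp, Rmult_le_pos; [apply mnorm_nonneg|unfold r; lra].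
Qed.

Lemma PSeries_lsum (l : list nat) (c : nat -> R) (b : nat -> nat -> R) t :
  (forall j, In j l -> ex_pseries (b j) t) ->
  ex_pseries (fun k => lsum l (fun j => c j * b j k)) t /\
  PSeries (fun k => lsum l (fun j => c j * b j k)) t = lsum l (fun j => c j * PSeries (b j) t).
Proof.
  induction l as [|a l IH]; intros H.
  - unfold lsum; simpl. split; [|apply PSeries_const_0].
    apply CV_radius_inside. rewrite CV_radius_const_0. simpl; auto.
  - destruct IH as [IH1 IH2]; [intros; apply H; simpl; auto|].
    assert (E : forall k, lsum (a :: l) (fun j => c j * b j k)
      = PS_plus (PS_scal (c a) (b a)) (fun k => lsum l (fun j => c j * b j k)) k) by reflexivity.
    assert (Hs : ex_pseries (PS_scal (c a) (b a)) t).
    { apply ex_pseries_scal; [unfold mult; simpl; ring|apply H; simpl; auto]. }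
    split.
    + eapply ex_pseries_ext; [intros k; symmetry; apply E|]. apply ex_pseries_plus; auto.
    + rewrite (PSeries_ext _ _ _ E), PSeries_plus, PSeries_scal, IH2; auto.
Qed.

Lemma exp_series_derive n A v i t : (i < n)%nat ->
  derivable_pt_lim (fun s => PSeries (exp_series_coef n A v i) s) t
    (mat_vec n A (fun j => PSeries (exp_series_coef n A v j) t) i).
Proof.
  intros Hi. apply is_derive_Reals.
  replace (mat_vec n A (fun j => PSeries (exp_series_coef n A v j) t) i)
    with (PSeries (PS_derive (exp_series_coef n A v i)) t).
  { apply is_derive_PSeries, exp_series_coef_radius; auto. }
  rewrite mat_vec_lsum.
  assert (Hex : forall j, In j (seq 0 n) -> ex_pseries (exp_series_coef n A v j) t).
  { intros j Hj. apply CV_radius_inside, exp_series_coef_radius, in_seq0; auto. }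
  destruct (PSeries_lsum _ (fun j => A i j) _ t Hex) as [_ <-].
  apply PSeries_ext. intros k. unfold PS_derive, exp_series_coef. simpl mat_pow_vec.
  rewrite mat_vec_lsum.
  assert (Hf : INR (Factorial.fact (S k)) = INR (S k) * INR (Factorial.fact k)) by (rewrite <- mult_INR; reflexivity).
  assert (INR (S k) <> 0) by (apply not_0_INR; lia). pose proof (INR_fact_neq_0 k).
  rewrite Hf. unfold Rdiv. rewrite (Rmult_comm (lsum _ _)), <- !lsum_scal.
  apply lsum_ext; intros; field; auto.
Qed.

Lemma solution_exists n A v : exists y, is_solution n (fun _ => A) y /\ forall i, y 0 i = v i.
Proof.
  exists (fun t i => PSeries (exp_series_coef n A v i) t). split.
  2:{ intros i. rewrite PSeries_0. unfold exp_series_coef; simpl; lra. }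
  intros i Hi. split.
  - intros t _. apply derivable_continuous_pt. eexists. apply exp_series_derive; auto.
  - intros t _ eps Heps. destruct (exp_series_derive n A v i t Hi eps Heps) as [d Hd].
    exists d. split; [apply cond_pos|]. intros h Hh. apply Hd; [lra|rewrite Rabs_right; lra].
Qed.

Lemma continuity_pt_eps f t : continuity_pt f t <->
  forall e, 0 < e -> exists d, 0 < d /\ forall s, Rabs (s - t) < d -> Rabs (f s - f t) < e.
Proof.
  split; intros H e He; destruct (H e He) as [d [Hd H']]; exists d; split; auto.
  - intros s Hs. destruct (Req_dec s t) as [->|Hne].
    + unfold Rminus; rewrite Rplus_opp_r, Rabs_R0; auto.
    + apply H'. split; [split; [exact I|intro E; apply Hne; auto]|exact Hs].
  - intros s [_ Hs]. apply H'. exact Hs.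
Qed.

Lemma right_deriv_right_cont f t l : right_deriv f t l ->
  forall e, 0 < e -> exists d, 0 < d /\ forall h, 0 < h < d -> Rabs (f (t + h) - f t) < e.
Proof.
  intros H e He. destruct (H 1 Rlt_0_1) as [d [Hd H']].
  set (K := Rabs l + 1 + 1). assert (HK : 0 < K) by (unfold K; pose proof (Rabs_pos l); lra).
  pose proof (Rmin_l d (e / K)); pose proof (Rmin_r d (e / K)).
  exists (Rmin d (e / K)). split; [apply Rmin_pos; auto; apply Rdiv_lt_0_compat; auto|].
  intros h Hh. specialize (H' h ltac:(lra)).
  assert (Hq : Rabs ((f (t + h) - f t) / h) < K).
  { pose proof (Rabs_triang_inv ((f (t + h) - f t) / h) l). unfold K; lra. }
  replace (f (t + h) - f t) with (h * ((f (t + h) - f t) / h)) by (field; lra).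
  rewrite Rabs_mult, Rabs_right by lra.
  apply Rle_lt_trans with (h * K); [apply Rmult_le_compat_l; lra|].
  replace e with (e / K * K) by (field; lra). apply Rmult_lt_compat_r; lra.
Qed.

Lemma right_deriv_minus f g t l1 l2 :
  right_deriv f t l1 -> right_deriv g t l2 -> right_deriv (fun s => f s - g s) t (l1 - l2).
Proof.
  intros H1 H2 e He.
  destruct (H1 (e / 2)) as [d1 [Hd1 H1']]; [lra|]. destruct (H2 (e / 2)) as [d2 [Hd2 H2']]; [lra|].
  pose proof (Rmin_l d1 d2); pose proof (Rmin_r d1 d2).
  exists (Rmin d1 d2); split; [apply Rmin_pos; auto|]. intros h Hh.
  specialize (H1' h ltac:(lra)). specialize (H2' h ltac:(lra)).
  replace ((f (t + h) - g (t + h) - (f t - g t)) / h - (l1 - l2)) with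
    (((f (t + h) - f t) / h - l1) - ((g (t + h) - g t) / h - l2)) by (field; lra).
  eapply Rle_lt_trans; [apply Rabs_triang|]. rewrite Rabs_Ropp. lra.
Qed.

Lemma right_deriv_locally_ext f g t l d : 0 < d ->
  (forall h, 0 <= h < d -> f (t + h) = g (t + h)) -> right_deriv g t l -> right_deriv f t l.
Proof.
  intros Hd Hfg H e He. destruct (H e He) as [d' [Hd' H']].
  pose proof (Rmin_l d d'); pose proof (Rmin_r d d').
  exists (Rmin d d'). split; [apply Rmin_pos; auto|]. intros h Hh.
  rewrite Hfg by lra. replace t with (t + 0) at 2 by ring.
  rewrite Hfg, Rplus_0_r by lra. apply H'; lra.
Qed.

Lemma right_deriv_shift f c t l : right_deriv f (t + c) l -> right_deriv (fun s => f (s + c)) t l.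
Proof.
  intros H e He. destruct (H e He) as [d [Hd H']]. exists d; split; auto. intros h Hh.
  replace (t + h + c) with (t + c + h) by ring. apply H'; auto.
Qed.

Lemma is_solution_minus n A x y :
  is_solution n A x -> is_solution n A y -> is_solution n A (fun t i => x t i - y t i).
Proof.
  intros Hx Hy i Hi. destruct (Hx i Hi) as [Hx1 Hx2], (Hy i Hi) as [Hy1 Hy2]. split.
  - intros t Ht. apply continuity_pt_minus; auto.
  - intros t Ht. rewrite mat_vec_minus. apply right_deriv_minus; auto.
Qed.

Definition concat_at (h : R) (z w : R -> nat -> R) : R -> nat -> R :=
  fun t i => if Rlt_dec t h then z t i else w (t - h) i.

Lemma concat_at_continuous_junction (z w : R -> R) h :
  continuity_pt z h -> w 0 = z h ->
  (forall e, 0 < e -> exists d, 0 < d /\ forall s, 0 < s < d -> Rabs (w s - w 0) < e) ->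
  continuity_pt (fun t => if Rlt_dec t h then z t else w (t - h)) h.
Proof.
  intros Hz Hwz Hw. apply continuity_pt_eps. intros e He.
  destruct (proj1 (continuity_pt_eps _ _) Hz e He) as [d1 [Hd1 H1]].
  destruct (Hw e He) as [d2 [Hd2 H2]].
  pose proof (Rmin_l d1 d2); pose proof (Rmin_r d1 d2).
  exists (Rmin d1 d2). split; [apply Rmin_pos; auto|]. intros s Hs.
  destruct (Rlt_dec h h) as [|_]; [lra|]. replace (h - h) with 0 by ring. rewrite Hwz.
  destruct (Rlt_dec s h) as [|Hsh]; [apply H1; lra|].
  destruct (Req_dec s h) as [->|Hne].
  - replace (h - h) with 0 by ring. rewrite Hwz, Rminus_diag, Rabs_R0; auto.
  - rewrite <- Hwz. apply H2. apply Rabs_def2 in Hs. lra.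
Qed.

Lemma is_solution_concat n A z w h : 0 < h ->
  is_solution n (fun _ => A) z -> is_solution n (fun _ => A) w ->
  (forall i, (i < n)%nat -> w 0 i = z h i) -> is_solution n (fun _ => A) (concat_at h z w).
Proof.
  intros Hh Hz Hw Hzw i Hi. destruct (Hz i Hi) as [Hz1 Hz2], (Hw i Hi) as [Hw1 Hw2].
  unfold concat_at. split.
  - intros t Ht. destruct (Rtotal_order t h) as [Hth|[->|Hth]].
    + apply (continuity_pt_locally_ext (fun s => z s i) _ (h - t)); [lra| |auto].
      intros s Hs. unfold Rdist in Hs. apply Rabs_def2 in Hs.
      destruct (Rlt_dec s h); [reflexivity|lra].
    + apply (concat_at_continuous_junction (fun s => z s i) (fun s => w s i)); auto.
      intros e He. destruct (right_deriv_right_cont _ _ _ (Hw2 0 (Rle_refl 0)) e He) as [d [Hd H]].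
      exists d. split; auto. intros s Hs. rewrite <- (Rplus_0_l s) at 1. auto.
    + apply (continuity_pt_locally_ext (fun s => w (s - h) i) _ (t - h)); [lra| |].
      * intros s Hs. unfold Rdist in Hs. apply Rabs_def2 in Hs.
        destruct (Rlt_dec s h); [lra|reflexivity].
      * apply (continuity_pt_comp (fun s => s - h) (fun s => w s i)); [reg|apply Hw1; lra].
  - intros t Ht. destruct (Rlt_dec t h) as [Hth|Hth].
    + rewrite (mat_vec_ext n A _ (z t)) by (intros j _; unfold concat_at; destruct (Rlt_dec t h); [reflexivity|lra]).
      apply right_deriv_locally_ext with (fun s => z s i) (h - t); [lra| |apply Hz2; auto].
      intros h' Hh'. destruct (Rlt_dec (t + h') h); [reflexivity|lra].
    + rewrite (mat_vec_ext n A _ (w (t - h))) by (intros j _; unfold concat_at; destruct (Rlt_dec t h); [lra|reflexivity]).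
      apply right_deriv_locally_ext with (fun s => w (s + - h) i) 1; [lra| |].
      * intros h' Hh'. destruct (Rlt_dec (t + h') h); [lra|reflexivity].
      * apply (right_deriv_shift (fun s => w s i) (- h)). apply Hw2. lra.
Qed.

Lemma Lub_Rbar_bounds (E : R -> Prop) r0 B : E r0 -> (forall r, E r -> r <= B) ->
  (forall r, E r -> r <= real (Lub_Rbar E)) /\ real (Lub_Rbar E) <= B.
Proof.
  intros H0 HB. destruct (Lub_Rbar_correct E) as [Hub Hl].
  assert (Hle : Rbar_le (Lub_Rbar E) B) by (apply Hl; intros r Hr; apply HB; auto).
  pose proof (Hub r0 H0) as H1.
  destruct (Lub_Rbar E) as [l| |]; simpl in *; try contradiction. split; auto.
Qed.

(* [lyap n A a v] is the sup over solutions [z] of [z' = A z] from [v] and [s >= 0] of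
   [e^(a s) |z s|]: taking the sup over all solutions avoids proving their uniqueness. *)
Definition lyap_values n A a (v : nat -> R) (r : R) : Prop :=
  exists z s, is_solution n (fun _ => A) z /\ (forall i, (i < n)%nat -> z 0 i = v i) /\
    0 <= s /\ r = exp (a * s) * vnorm n (z s).

Definition lyap n A a v : R := real (Lub_Rbar (lyap_values n A a v)).

Section Lyapunov.
Variables (n : nat) (A : nat -> nat -> R) (a C : R).
Hypothesis Hstab : forall z, is_solution n (fun _ => A) z -> forall t, 0 <= t ->
  vnorm n (z t) <= C * exp (- (a * t)) * vnorm n (z 0).

Lemma lyap_values_le v r : lyap_values n A a v r -> r <= C * vnorm n v.
Proof.
  intros [z [s [Hz [H0 [Hs ->]]]]]. rewrite <- (vnorm_ext n (z 0) v H0).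
  eapply Rle_trans; [apply Rmult_le_compat_l; [left; apply exp_pos|apply Hstab; auto]|].
  assert (E : exp (a * s) * exp (- (a * s)) = 1) by (rewrite <- exp_plus, Rplus_opp_r; apply exp_0).
  right. transitivity (C * vnorm n (z 0) * (exp (a * s) * exp (- (a * s)))); [ring|].
  rewrite E; ring.
Qed.

Lemma lyap_values_initial v : lyap_values n A a v (vnorm n v).
Proof.
  destruct (solution_exists n A v) as [z [Hz H0]].
  exists z, 0. split; [auto|split; [intros; auto|split; [lra|]]].
  rewrite Rmult_0_r, exp_0, Rmult_1_l. apply vnorm_ext. intros; rewrite H0; auto.
Qed.

Let lyap_bounds v := Lub_Rbar_bounds _ _ _ (lyap_values_initial v) (lyap_values_le v).

Lemma lyap_ub v r : lyap_values n A a v r -> r <= lyap n A a v.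
Proof. apply (proj1 (lyap_bounds v)). Qed.

Lemma lyap_le v : lyap n A a v <= C * vnorm n v.
Proof. apply (proj2 (lyap_bounds v)). Qed.

Lemma lyap_ge v : vnorm n v <= lyap n A a v.
Proof. apply lyap_ub, lyap_values_initial. Qed.

Lemma lyap_nonneg v : 0 <= lyap n A a v.
Proof. eapply Rle_trans; [apply vnorm_nonneg|apply lyap_ge]. Qed.

(* Solutions from [v] split as a solution from [w] plus one from [v - w]. *)
Lemma lyap_le_plus_lip v w : lyap n A a v <= lyap n A a w + C * vnorm n (fun i => v i - w i).
Proof.
  refine (proj2 (Lub_Rbar_bounds _ _ _ (lyap_values_initial v) _)).
  intros r [z [s [Hz [H0 [Hs ->]]]]].
  destruct (solution_exists n A (fun i => v i - w i)) as [y [Hy Hy0]].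
  assert (Hzy : lyap_values n A a w (exp (a * s) * vnorm n (fun i => z s i - y s i))).
  { exists (fun t i => z t i - y t i), s.
    split; [apply is_solution_minus; auto|split; [|split; [auto|reflexivity]]].
    intros i Hi. rewrite H0, Hy0 by auto. ring. }
  assert (Hy' : lyap_values n A a (fun i => v i - w i) (exp (a * s) * vnorm n (y s))).
  { exists y, s. split; [auto|split; [intros; auto|split; [auto|reflexivity]]]. }
  pose proof (lyap_ub _ _ Hzy). pose proof (lyap_values_le _ _ Hy').
  pose proof (vnorm_le_plus_minus n (z s) (fun i => z s i - y s i)) as Htri. cbv beta in Htri.
  replace (vnorm n (fun i => z s i - (z s i - y s i))) with (vnorm n (y s)) in Htri
    by (apply vnorm_ext; intros; ring).
  pose proof (exp_pos (a * s)). nra.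
Qed.

Lemma lyap_lip v w : Rabs (lyap n A a v - lyap n A a w) <= C * vnorm n (fun i => v i - w i).
Proof.
  pose proof (lyap_le_plus_lip v w). pose proof (lyap_le_plus_lip w v).
  rewrite <- vnorm_minus_sym in H0. apply Rabs_le; split; lra.
Qed.

Lemma lyap_ext v w : (forall i, (i < n)%nat -> v i = w i) -> lyap n A a v = lyap n A a w.
Proof.
  intros H. pose proof (lyap_lip v w) as Hl.
  rewrite (vnorm_ext n _ (fun _ => 0 * 0)), vnorm_scal, Rabs_R0, Rmult_0_l, Rmult_0_r in Hl
    by (intros; rewrite H; auto; ring).
  apply Rabs_le_between in Hl. lra.
Qed.

(* A solution from [z h], glued after [z] on [0, h], is a solution from [z 0]. *)
Lemma lyap_flow_decay z h : is_solution n (fun _ => A) z -> 0 <= h ->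
  lyap n A a (z h) <= exp (- (a * h)) * lyap n A a (z 0).
Proof.
  intros Hz Hh. destruct (Req_dec h 0) as [->|Hne].
  { rewrite Rmult_0_r, Ropp_0, exp_0; lra. }
  refine (proj2 (Lub_Rbar_bounds _ _ _ (lyap_values_initial _) _)).
  intros r [w [s [Hw [H0 [Hs ->]]]]].
  assert (Hcat : lyap_values n A a (z 0) (exp (a * (h + s)) * vnorm n (w s))).
  { exists (concat_at h z w), (h + s).
    split; [apply is_solution_concat; auto; lra|split; [|split; [lra|]]].
    - intros i Hi. unfold concat_at. destruct (Rlt_dec 0 h); [reflexivity|lra].
    - f_equal. apply vnorm_ext. intros i _. unfold concat_at.
      destruct (Rlt_dec (h + s) h); [lra|]. f_equal. ring. }
  apply lyap_ub in Hcat. rewrite Rmult_plus_distr_l, exp_plus in Hcat.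
  apply Rmult_le_reg_l with (exp (a * h)); [apply exp_pos|].
  replace (exp (a * h) * (exp (- (a * h)) * lyap n A a (z 0))) with (lyap n A a (z 0))
    by (rewrite <- Rmult_assoc, <- exp_plus, Rplus_opp_r, exp_0; ring).
  lra.
Qed.

End Lyapunov.

Lemma real_induction (a b : R) (P : R -> Prop) : a <= b -> P a ->
  (forall u, a <= u < b -> P u -> exists e, 0 < e /\ forall s, u < s < u + e -> P s) ->
  (forall u, a < u <= b -> (forall s, a <= s < u -> P s) -> P u) ->
  forall u, a <= u <= b -> P u.
Proof.
  intros Hab Ha Hr Hl T HT. apply NNPP. intros HnT.
  set (E := fun t => a <= t <= T /\ forall s, a <= s <= t -> P s).
  assert (HaE : E a) by (split; [lra|intros s Hs; replace s with a by lra; auto]).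
  destruct (completeness E) as [m [Hub Hlub]];
    [exists T; intros t Ht; apply Ht|exists a; auto|].
  assert (Ham : a <= m) by (apply Hub; auto).
  assert (HmT : m <= T) by (apply Hlub; intros t Ht; apply Ht).
  assert (Hbelow : forall s, a <= s < m -> P s).
  { intros s Hs. apply NNPP; intros Hns.
    assert (Hs' : is_upper_bound E s).
    { intros t [Ht1 Ht2]. apply Rnot_lt_le. intros Hst. apply Hns, Ht2. lra. }
    specialize (Hlub s Hs'). lra. }
  assert (Pm : P m) by (destruct (Req_dec m a) as [->|]; [auto|apply Hl; lra || auto]).
  assert (HmT' : m < T) by (destruct (Req_dec m T) as [->|]; [contradiction|lra]).
  destruct (Hr m ltac:(lra) Pm) as [e [He Hs]].
  pose proof (Rmin_l (m + e / 2) T); pose proof (Rmin_r (m + e / 2) T).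
  set (t' := Rmin (m + e / 2) T) in *.
  assert (Ht' : E t').
  { split; [split; [apply Rmin_glb|]; lra|].
    intros s Hs'. destruct (Rlt_dec s m); [apply Hbelow; lra|].
    destruct (Req_dec s m) as [->|]; [auto|apply Hs; lra]. }
  specialize (Hub t' Ht'). unfold t' in Hub. apply (Rmin_case (m + e / 2) T (fun r => r <= m -> False)); lra.
Qed.

Lemma Rle_of_le_plus_eps X Y c : 0 <= c -> (forall eta, 0 < eta -> X <= Y + eta * c) -> X <= Y.
Proof.
  intros Hc H. apply Rnot_lt_le; intros HYX.
  specialize (H ((X - Y) / (2 * (c + 1))) ltac:(apply Rdiv_lt_0_compat; lra)).
  assert ((X - Y) / (2 * (c + 1)) * c < X - Y).
  { apply Rmult_lt_reg_r with (2 * (c + 1)); [lra|].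
    replace ((X - Y) / (2 * (c + 1)) * c * (2 * (c + 1))) with ((X - Y) * c) by (field; lra). nra. }
  lra.
Qed.

Lemma exp_le_compat x y : x <= y -> exp x <= exp y.
Proof. intros [H|H]; [left; apply exp_increasing; auto|rewrite H; right; reflexivity]. Qed.

Lemma exp_mul_one_minus_le x : exp x * (1 - x) <= 1.
Proof.
  pose proof (exp_ineq1_le (- x)). pose proof (exp_pos x).
  assert (exp x * exp (- x) = 1) by (rewrite <- exp_plus, Rplus_opp_r; apply exp_0).
  nra.
Qed.

Lemma exp_le_2_near_0 beta : exists d, 0 < d /\ forall h, 0 <= h < d -> exp (beta * h) <= 2.
Proof.
  assert (Hl2 : 0 < ln 2) by (rewrite <- ln_1; apply ln_increasing; lra).
  pose proof (Rabs_pos beta).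
  exists (ln 2 / (Rabs beta + 1)). split; [apply Rdiv_lt_0_compat; lra|]. intros h Hh.
  rewrite <- (exp_ln 2) by lra. apply exp_le_compat.
  apply Rle_trans with (Rabs beta * h); [apply Rmult_le_compat_r; [lra|apply Rle_abs]|].
  apply Rle_trans with ((Rabs beta + 1) * (ln 2 / (Rabs beta + 1))); [nra|].
  right; field; lra.
Qed.

Lemma weighted_dini_step (f : R -> R) beta K u : 0 < K -> 0 <= f u ->
  (forall eps, 0 < eps -> exists d, 0 < d /\
     forall h, 0 < h < d -> f (u + h) <= f u - h * beta * f u + h * eps) ->
  forall eta, 0 < eta -> exists d, 0 < d /\
    forall h, 0 < h < d -> K * exp (beta * h) * f (u + h) <= K * f u + eta * h.
Proof.
  intros HK Hfu Hd eta Heta.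
  destruct (Hd (eta / (2 * K))) as [d1 [Hd1 H1]]; [apply Rdiv_lt_0_compat; lra|].
  destruct (exp_le_2_near_0 beta) as [d2 [Hd2 H2]].
  pose proof (Rmin_l d1 d2); pose proof (Rmin_r d1 d2).
  exists (Rmin d1 d2). split; [apply Rmin_pos; auto|]. intros h Hh.
  specialize (H1 h ltac:(lra)). specialize (H2 h ltac:(lra)).
  pose proof (exp_mul_one_minus_le (beta * h)). pose proof (exp_pos (beta * h)).
  assert (Hlin : exp (beta * h) * (f u * (1 - h * beta)) <= f u).
  { replace (h * beta) with (beta * h) by ring. nra. }
  assert (Herr : exp (beta * h) * (h * (eta / (2 * K))) <= eta * h / K).
  { replace (eta * h / K) with (2 * (h * (eta / (2 * K)))) by (field; lra).
    apply Rmult_le_compat_r; [|lra]. apply Rmult_le_pos; [lra|]. left; apply Rdiv_lt_0_compat; lra. }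
  assert (Hstep : exp (beta * h) * f (u + h) <= f u + eta * h / K).
  { apply Rle_trans with (exp (beta * h) * (f u * (1 - h * beta) + h * (eta / (2 * K)))).
    - apply Rmult_le_compat_l; lra.
    - rewrite Rmult_plus_distr_l. lra. }
  replace (K * f u + eta * h) with (K * (f u + eta * h / K)) by (field; lra).
  rewrite Rmult_assoc. apply Rmult_le_compat_l; lra.
Qed.

Lemma dini_gronwall (f : R -> R) (beta a b : R) : a <= b ->
  (forall u, a <= u <= b -> 0 <= f u) ->
  (forall u, a < u <= b -> continuity_pt f u) ->
  (forall u, a <= u < b -> forall eps, 0 < eps -> exists d, 0 < d /\
     forall h, 0 < h < d -> f (u + h) <= f u - h * beta * f u + h * eps) ->
  f b <= exp (- (beta * (b - a))) * f a.
Proof.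
  intros Hab Hpos Hc Hd.
  set (g := fun s => exp (beta * (s - a)) * f s).
  assert (Hg : forall eta, 0 < eta -> forall u, a <= u <= b -> g u <= f a + eta * (u - a)).
  { intros eta Heta.
    apply (real_induction a b (fun u => g u <= f a + eta * (u - a))); [lra| | |].
    - unfold g. rewrite Rminus_diag, Rmult_0_r, exp_0. lra.
    - intros u Hu Pu.
      destruct (weighted_dini_step f beta (exp (beta * (u - a))) u (exp_pos _)
                  (Hpos u ltac:(lra)) (Hd u Hu) eta Heta) as [d [Hdp Hstep]].
      exists d. split; auto. intros s Hs. specialize (Hstep (s - u) ltac:(lra)).
      unfold g in *. replace (u + (s - u)) with s in Hstep by ring.
      rewrite <- exp_plus in Hstep. replace (beta * (u - a) + beta * (s - u)) with (beta * (s - a)) in Hstep by ring.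
      lra.
    - intros u Hu Hbel. apply (Rle_of_le_plus_eps _ _ 1); [lra|]. intros e He.
      assert (Hcg : continuity_pt g u).
      { apply (continuity_pt_mult (fun s => exp (beta * (s - a))) f); [reg|apply Hc; auto]. }
      destruct (proj1 (continuity_pt_eps g u) Hcg e He) as [d [Hdp Hd']].
      pose proof (Rmax_l a (u - d / 2)); pose proof (Rmax_r a (u - d / 2)).
      set (s := Rmax a (u - d / 2)) in *.
      assert (Hsu : s < u) by (unfold s; apply Rmax_lub_lt; lra).
      specialize (Hbel s ltac:(lra)). specialize (Hd' s ltac:(rewrite Rabs_left; lra)).
      apply Rabs_def2 in Hd'. nra. }
  assert (Hgb : exp (beta * (b - a)) * f b <= f a).
  { apply (Rle_of_le_plus_eps _ _ (b - a)); [lra|]. intros eta Heta. apply (Hg eta Heta b). lra. }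
  replace (f b) with (exp (- (beta * (b - a))) * (exp (beta * (b - a)) * f b))
    by (rewrite <- Rmult_assoc, <- exp_plus, Rplus_opp_l, exp_0; ring).
  apply Rmult_le_compat_l; [left; apply exp_pos|auto].
Qed.

Lemma right_deriv_scaled_close (f y : R -> R) u g l1 l2 : 0 < g -> y 0 = f u ->
  right_deriv f u (l1 + g * l2) -> right_deriv y 0 l2 ->
  forall e, 0 < e -> exists d, 0 < d /\
    forall h, 0 < h < d -> Rabs (f (u + h) - y (g * h) - h * l1) <= h * e.
Proof.
  intros Hg Hy0 Hf Hy e He.
  destruct (Hf (e / 2)) as [d1 [Hd1 H1]]; [lra|].
  destruct (Hy (e / (2 * g))) as [d2 [Hd2 H2]]; [apply Rdiv_lt_0_compat; lra|].
  pose proof (Rmin_l d1 (d2 / g)); pose proof (Rmin_r d1 (d2 / g)).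
  assert (Hd2g : 0 < d2 / g) by (apply Rdiv_lt_0_compat; lra).
  exists (Rmin d1 (d2 / g)). split; [apply Rmin_pos; auto|]. intros h Hh.
  assert (Hgh : 0 < g * h < d2).
  { split; [nra|]. replace d2 with (g * (d2 / g)) by (field; lra). apply Rmult_lt_compat_l; lra. }
  specialize (H1 h ltac:(lra)). specialize (H2 (g * h) Hgh). rewrite Rplus_0_l in H2.
  set (P := (f (u + h) - f u) / h - (l1 + g * l2)) in H1.
  set (Q := (y (g * h) - y 0) / (g * h) - l2) in H2.
  replace (f (u + h) - y (g * h) - h * l1) with (h * P - (g * h) * Q) by (unfold P, Q; rewrite Hy0; field; lra).
  eapply Rle_trans; [apply Rabs_triang|]. rewrite Rabs_Ropp, !Rabs_mult, (Rabs_right g), (Rabs_right h) by lra.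
  assert (h * Rabs P <= h * (e / 2)) by (apply Rmult_le_compat_l; lra).
  assert (g * h * Rabs Q <= g * h * (e / (2 * g))) by (apply Rmult_le_compat_l; nra).
  replace (g * h * (e / (2 * g))) with (h * (e / 2)) in * by (field; lra). lra.
Qed.

Lemma perturbed_flow_close n A N g (x z : R -> nat -> R) u : 0 < g ->
  (forall i, (i < n)%nat -> right_deriv (fun s => x s i) u (mat_vec n (fun i j => N i j + g * A i j) (x u) i)) ->
  is_solution n (fun _ => A) z -> (forall i, (i < n)%nat -> z 0 i = x u i) ->
  forall eps, 0 < eps -> exists d, 0 < d /\ forall h, 0 < h < d ->
    vnorm n (fun i => x (u + h) i - z (g * h) i) <= h * (mnorm n N * vnorm n (x u) + eps).
Proof.
  intros Hg Hx Hz Hz0 eps Heps. pose proof (pos_INR n) as Hn.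
  set (e := eps / (INR n + 1)). assert (He : 0 < e) by (apply Rdiv_lt_0_compat; lra).
  destruct (common_delta n (fun i d => forall h, 0 < h < d ->
     Rabs (x (u + h) i - z (g * h) i - h * mat_vec n N (x u) i) <= h * e)) as [d [Hd H]].
  { intros i d d' Hdd Hi h Hh. apply Hi; lra. }
  { intros i Hi. apply (right_deriv_scaled_close (fun s => x s i) (fun s => z s i) u g _ (mat_vec n A (x u) i)); auto.
    - rewrite <- mat_vec_plus_scal. apply Hx; auto.
    - rewrite (mat_vec_ext n A (x u) (z 0)) by (intros; rewrite Hz0; auto).
      apply (proj2 (Hz i Hi)). lra. }
  exists d. split; auto. intros h Hh.
  eapply Rle_trans; [apply (vnorm_le_plus_minus n _ (fun i => h * mat_vec n N (x u) i))|].
  rewrite vnorm_scal, Rabs_right by lra.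
  pose proof (vnorm_mat_vec_le n N (x u)).
  assert (Herr : vnorm n (fun i => x (u + h) i - z (g * h) i - h * mat_vec n N (x u) i) <= h * eps).
  { eapply Rle_trans; [apply vnorm_le_componentwise; intros i Hi; apply H; auto|].
    replace (h * eps) with (INR n * (h * e) + h * e) by (unfold e; field; lra).
    assert (0 <= h * e) by (apply Rmult_le_pos; lra). lra. }
  nra.
Qed.

Lemma exp_neg_le_quadratic y : 0 <= y -> exp (- y) <= 1 - y + y * y.
Proof.
  intros Hy. pose proof (exp_ineq1_le y). pose proof (exp_pos (- y)).
  assert (exp y * exp (- y) = 1) by (rewrite <- exp_plus, Rplus_opp_r; apply exp_0).
  assert ((1 - y + y * y) * (1 + y) >= 1) by nra. nra.
Qed.

Section LyapunovDini.
Variables (n : nat) (A N : nat -> nat -> R) (a C g : R).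
Hypothesis Hstab : forall z, is_solution n (fun _ => A) z -> forall t, 0 <= t ->
  vnorm n (z t) <= C * exp (- (a * t)) * vnorm n (z 0).
Hypothesis Ha : 0 < a.
Hypothesis HC : 1 <= C.
Hypothesis Hg : 0 < g.

(* Compare [x] with the flow of [A] run [g] times faster: [lyap] decays at rate [a g]
   along the latter and is [C]-Lipschitz, so [N] costs at most [C |N|]. *)
Lemma lyap_dini x u : 0 <= u ->
  (forall i, (i < n)%nat -> right_deriv (fun s => x s i) u (mat_vec n (fun i j => N i j + g * A i j) (x u) i)) ->
  forall eps, 0 < eps -> exists d, 0 < d /\ forall h, 0 < h < d ->
    lyap n A a (x (u + h)) <= lyap n A a (x u) - h * (a * g - C * mnorm n N) * lyap n A a (x u) + h * eps.
Proof.
  intros Hu Hx eps Heps.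
  destruct (solution_exists n A (x u)) as [z [Hz Hz0]].
  pose proof (lyap_nonneg n A a C Hstab (x u)) as HL.
  pose proof (lyap_ge n A a C Hstab (x u)) as HxL. pose proof (mnorm_nonneg n N).
  set (L := lyap n A a (x u)) in *.
  destruct (perturbed_flow_close n A N g x z u Hg Hx Hz (fun i _ => Hz0 i) (eps / (2 * C)))
    as [d1 [Hd1 H1]]; [apply Rdiv_lt_0_compat; lra|].
  set (q := (a * g) * (a * g) * L).
  assert (Hq : 0 <= q) by (apply Rmult_le_pos; [nra|auto]).
  set (d2 := eps / (2 * (q + 1))). assert (Hd2 : 0 < d2) by (apply Rdiv_lt_0_compat; lra).
  pose proof (Rmin_l d1 d2); pose proof (Rmin_r d1 d2).
  exists (Rmin d1 d2). split; [apply Rmin_pos; auto|]. intros h Hh.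
  assert (Hgh : 0 <= g * h) by nra.
  pose proof (lyap_flow_decay n A a C Hstab z (g * h) Hz Hgh) as Hdecay.
  rewrite (lyap_ext n A a C Hstab (z 0) (x u)) in Hdecay by (intros; apply Hz0).
  pose proof (lyap_le_plus_lip n A a C Hstab (x (u + h)) (z (g * h))) as Hlip.
  specialize (H1 h ltac:(lra)).
  assert (HE : exp (- (a * (g * h))) <= 1 - a * g * h + (a * g * h) * (a * g * h)).
  { replace (a * (g * h)) with (a * g * h) by ring. apply exp_neg_le_quadratic. nra. }
  assert (Hsq : h * q <= eps / 2).
  { apply Rle_trans with (d2 * (q + 1)); [nra|]. unfold d2. right; field. lra. }
  assert (HCe : C * (h * (mnorm n N * vnorm n (x u) + eps / (2 * C))) <= C * h * mnorm n N * L + h * (eps / 2)).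
  { replace (C * (h * (mnorm n N * vnorm n (x u) + eps / (2 * C))))
      with (C * h * mnorm n N * vnorm n (x u) + h * (eps / 2)) by (field; lra).
    assert (0 <= C * h * mnorm n N) by (apply Rmult_le_pos; nra).
    apply Rplus_le_compat_r, Rmult_le_compat_l; auto. }
  assert (exp (- (a * (g * h))) * L <= (1 - a * g * h + (a * g * h) * (a * g * h)) * L)
    by (apply Rmult_le_compat_r; lra).
  assert (C * vnorm n (fun i => x (u + h) i - z (g * h) i)
          <= C * (h * (mnorm n N * vnorm n (x u) + eps / (2 * C)))) by (apply Rmult_le_compat_l; lra).
  fold L in Hdecay. unfold q in Hsq. nra.
Qed.

End LyapunovDini.

Lemma exp_stable_uniform n p (M : nat -> nat -> nat -> R) :
  (forall k, (1 <= k <= p)%nat -> exp_stable n (M k)) ->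
  exists a C, 0 < a /\ 1 <= C /\ forall k, (1 <= k <= p)%nat ->
    forall z, is_solution n (fun _ => M k) z -> forall t, 0 <= t ->
      vnorm n (z t) <= C * exp (- (a * t)) * vnorm n (z 0).
Proof.
  induction p as [|p IH]; intros H.
  - exists 1, 1. split; [lra|split; [lra|intros; lia]].
  - destruct IH as [a [C [Ha [HC IHs]]]]; [intros; apply H; lia|].
    destruct (H (S p)) as [c [a' [Hc [Ha' Hs]]]]; [lia|].
    pose proof (Rmin_l a a'); pose proof (Rmin_r a a'); pose proof (Rmax_l C c); pose proof (Rmax_r C c).
    exists (Rmin a a'), (Rmax C c). split; [apply Rmin_pos; auto|split; [lra|]].
    intros k Hk z Hz t Ht.
    assert (Hweaken : forall C0 a0, 0 <= C0 <= Rmax C c -> Rmin a a' <= a0 ->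
      C0 * exp (- (a0 * t)) * vnorm n (z 0) <= Rmax C c * exp (- (Rmin a a' * t)) * vnorm n (z 0)).
    { intros C0 a0 HC0 Ha0. apply Rmult_le_compat_r; [apply vnorm_nonneg|].
      pose proof (exp_pos (- (a0 * t))).
      apply Rmult_le_compat; [lra|lra|lra|]. apply exp_le_compat. nra. }
    destruct (Nat.eq_dec k (S p)) as [->|Hne].
    + eapply Rle_trans; [apply Hs; auto|]. apply Hweaken; lra.
    + eapply Rle_trans; [apply (IHs k); auto; lia|]. apply Hweaken; lra.
Qed.

Lemma exp_decay_compose beta u s K Q :
  exp (- (beta * (s - u))) * (K * exp (- (beta * u)) * Q) = K * exp (- (beta * s)) * Q.
Proof.
  rewrite (Rmult_comm K), !Rmult_assoc, <- (Rmult_assoc (exp _)), <- exp_plus.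
  replace (- (beta * (s - u)) + - (beta * u)) with (- (beta * s)) by ring. ring.
Qed.

Lemma not_discont_left_value (sigma : R -> nat) u e k : 0 < e ->
  (forall v, u - e < v < u -> sigma v = k) -> ~ discont sigma u -> sigma u = k.
Proof.
  intros He Hk Hnd. apply NNPP in Hnd. destruct Hnd as [eta [Heta Heq]].
  pose proof (Rmin_l eta e); pose proof (Rmin_r eta e); pose proof (Rmin_pos eta e Heta He).
  rewrite <- (Heq (u - Rmin eta e / 2)); [apply Hk; lra|rewrite Rabs_left; lra].
Qed.

Section Switching.
Variables (n p : nat) (M : nat -> nat -> nat -> R) (N : nat -> nat -> R) (a C g : R)
  (sigma : R -> nat) (x : R -> nat -> R).
Hypothesis Hstab : forall k, (1 <= k <= p)%nat -> forall z, is_solution n (fun _ => M k) z ->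
  forall t, 0 <= t -> vnorm n (z t) <= C * exp (- (a * t)) * vnorm n (z 0).
Hypothesis Ha : 0 < a.
Hypothesis HC : 1 <= C.
Hypothesis Hg : 0 < g.
Hypothesis Hsw : switching_signal p sigma.
Hypothesis Hx : is_solution n (fun t i j => N i j + g * M (sigma t) i j) x.

Definition switched_rate := a * g - C * mnorm n N.

Definition mode_lyap k s := lyap n (M k) a (x s).

Lemma mode_lyap_continuous k u : (1 <= k <= p)%nat -> 0 < u -> continuity_pt (mode_lyap k) u.
Proof.
  intros Hk Hu. apply continuity_pt_eps. intros e He. pose proof (pos_INR n).
  set (e' := e / (C * (INR n + 1))).
  assert (He' : 0 < e') by (apply Rdiv_lt_0_compat; [lra|nra]).
  destruct (common_delta n (fun i d => forall s, Rabs (s - u) < d -> Rabs (x s i - x u i) < e'))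
    as [d [Hd Hclose]].
  { intros i d d' Hdd Hi s Hs. apply Hi; lra. }
  { intros i Hi. apply (proj1 (continuity_pt_eps (fun s => x s i) u)); auto. apply (proj1 (Hx i Hi)); auto. }
  exists d. split; auto. intros s Hsu.
  eapply Rle_lt_trans; [apply (lyap_lip n (M k) a C (Hstab k Hk))|].
  eapply Rle_lt_trans; [apply Rmult_le_compat_l; [lra|apply (vnorm_le_componentwise n _ e')]|].
  { intros i Hi. left; apply Hclose; auto. }
  unfold e'. replace (C * (INR n * (e / (C * (INR n + 1))))) with (e * (INR n / (INR n + 1))) by (field; lra).
  rewrite <- (Rmult_1_r e) at 2. apply Rmult_lt_compat_l; auto.
  apply Rmult_lt_reg_r with (INR n + 1); [lra|]. field_simplify; lra.
Qed.

Lemma mode_lyap_decay k u s : (1 <= k <= p)%nat -> 0 <= u <= s ->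
  (forall v, u <= v < s -> sigma v = k) ->
  mode_lyap k s <= exp (- (switched_rate * (s - u))) * mode_lyap k u.
Proof.
  intros Hk Hus Hsig. apply dini_gronwall; [lra| | |].
  - intros v _. apply (lyap_nonneg n (M k) a C (Hstab k Hk)).
  - intros v Hv. apply mode_lyap_continuous; auto; lra.
  - intros v Hv. apply (lyap_dini n (M k) N a C g (Hstab k Hk) Ha HC Hg x v); [lra|].
    intros i Hi. rewrite <- (Hsig v Hv). apply (proj2 (Hx i Hi)). lra.
Qed.

Lemma mode_lyap_switch j k s : (1 <= j <= p)%nat -> (1 <= k <= p)%nat ->
  mode_lyap j s <= C * mode_lyap k s.
Proof.
  intros Hj Hk. eapply Rle_trans; [apply (lyap_le n (M j) a C (Hstab j Hj))|].
  apply Rmult_le_compat_l; [lra|apply (lyap_ge n (M k) a C (Hstab k Hk))].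
Qed.

(* Each switch costs a factor [C]; [l] records the switching times seen so far. *)
Definition switched_bound t := exists l : list R, NoDup l /\
  (forall s, In s l -> 0 < s <= t /\ discont sigma s) /\
  mode_lyap (sigma t) t <= C ^ length l * exp (- (switched_rate * t)) * mode_lyap (sigma 0) 0.

Lemma switched_bound_right u : 0 <= u -> switched_bound u ->
  exists e, 0 < e /\ forall s, u < s < u + e -> switched_bound s.
Proof.
  intros Hu [l [Hnd [Hl Hb]]]. destruct Hsw as [Hrange [Hright _]].
  destruct (Hright u Hu) as [e [He Hc]]. exists e. split; auto. intros s Hs.
  exists l. split; [auto|split; [intros r Hr; destruct (Hl r Hr); split; auto; lra|]].
  rewrite (Hc s) by lra. eapply Rle_trans.
  - apply (mode_lyap_decay (sigma u) u s); [apply Hrange; lra|lra|intros v Hv; apply Hc; lra].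
  - rewrite <- (exp_decay_compose _ u s). apply Rmult_le_compat_l; [left; apply exp_pos|auto].
Qed.

Lemma switched_bound_left u : 0 < u -> (forall s, 0 <= s < u -> switched_bound s) ->
  switched_bound u.
Proof.
  intros Hu Hbelow. destruct Hsw as [Hrange [_ Hleft]].
  destruct (Hleft u Hu) as [e [He [k Hk]]].
  pose proof (Rmin_l e u); pose proof (Rmin_r e u); pose proof (Rmin_pos e u He Hu).
  set (s := u - Rmin e u / 2).
  destruct (Hbelow s ltac:(unfold s; lra)) as [l [Hnd [Hl Hb]]].
  assert (Hsk : sigma s = k) by (apply Hk; unfold s; lra).
  assert (Hkr : (1 <= k <= p)%nat) by (rewrite <- Hsk; apply Hrange; unfold s; lra).
  rewrite Hsk in Hb.
  assert (Hku : mode_lyap k u <= C ^ length l * exp (- (switched_rate * u)) * mode_lyap (sigma 0) 0).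
  { eapply Rle_trans; [apply (mode_lyap_decay k s u); auto; unfold s; try lra; intros v Hv; apply Hk; lra|].
    rewrite <- (exp_decay_compose _ s u). apply Rmult_le_compat_l; [left; apply exp_pos|auto]. }
  destruct (classic (discont sigma u)) as [Hdis|Hndis].
  - exists (u :: l). split; [constructor; auto; intros Hin; destruct (Hl u Hin); unfold s in *; lra|].
    split; [intros r [<-|Hr]; [split; [lra|auto]|destruct (Hl r Hr); split; auto; unfold s in *; lra]|].
    simpl length. rewrite <- tech_pow_Rmult.
    eapply Rle_trans; [apply (mode_lyap_switch (sigma u) k); auto; apply Hrange; lra|].
    rewrite !Rmult_assoc. apply Rmult_le_compat_l; [lra|]. rewrite <- !Rmult_assoc. auto.
  - exists l. split; [auto|split; [intros r Hr; destruct (Hl r Hr); split; auto; unfold s in *; lra|]].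
    rewrite (not_discont_left_value sigma u e k He Hk Hndis). auto.
Qed.

Lemma switched_bound_all t : 0 <= t -> switched_bound t.
Proof.
  intros Ht. apply (real_induction 0 t switched_bound); [lra| | | |lra].
  - exists nil. split; [constructor|split; [intros s []|]].
    simpl. rewrite Rmult_0_r, Ropp_0, exp_0. lra.
  - intros u Hu. apply switched_bound_right. lra.
  - intros u Hu Hbelow. apply switched_bound_left; [lra|]. intros s Hs. apply Hbelow. lra.
Qed.

Lemma switched_solution_bound t : 0 <= t -> exists l : list R, NoDup l /\
  (forall s, In s l -> 0 < s <= t /\ discont sigma s) /\
  vnorm n (x t) <= C ^ length l * exp (- (switched_rate * t)) * (C * vnorm n (x 0)).
Proof.
  intros Ht. destruct (switched_bound_all t Ht) as [l [Hnd [Hl Hb]]].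
  exists l. split; auto. split; auto. destruct Hsw as [Hrange _].
  assert (Hr0 : (1 <= sigma 0 <= p)%nat) by (apply Hrange; lra).
  assert (Hrt : (1 <= sigma t <= p)%nat) by (apply Hrange; lra).
  eapply Rle_trans; [apply (lyap_ge n (M (sigma t)) a C (Hstab _ Hrt))|].
  eapply Rle_trans; [apply Hb|]. apply Rmult_le_compat_l.
  - apply Rmult_le_pos; [apply pow_le; lra|left; apply exp_pos].
  - apply (lyap_le n (M (sigma 0)) a C (Hstab _ Hr0)).
Qed.

End Switching.

(* [C ^ m = e^(m ln C)] with [m <= N0 + (t + 1) / tauD], and the excess rate absorbs [t ln C / tauD]. *)
Lemma switch_cost_le C m tauD N0 beta lam t : 1 <= C -> 0 < tauD -> 0 <= t ->
  INR m <= N0 + (t + 1) / tauD -> lam <= beta - ln C / tauD ->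
  C ^ m * exp (- (beta * t)) <= exp (ln C * (N0 + 1 / tauD)) * exp (- (lam * t)).
Proof.
  intros HC HtauD Ht Hm Hbeta.
  assert (HlnC : 0 <= ln C) by (rewrite <- ln_1; apply ln_le; lra).
  rewrite <- (exp_ln (C ^ m)) by (apply pow_lt; lra).
  rewrite ln_pow by lra. rewrite <- !exp_plus. apply exp_le_compat.
  assert (INR m * ln C <= (N0 + (t + 1) / tauD) * ln C) by (apply Rmult_le_compat_r; auto).
  assert (lam * t <= (beta - ln C / tauD) * t) by (apply Rmult_le_compat_r; auto).
  replace ((N0 + (t + 1) / tauD) * ln C) with (ln C * (N0 + 1 / tauD) + ln C / tauD * t) in * by (field; lra).
  lra.
Qed.

Theorem lemma4 (n p : nat) (M : nat -> nat -> nat -> R) (N : nat -> nat -> R)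
    (tauD N0 lam : R) :
  (forall k, (1 <= k <= p)%nat -> exp_stable n (M k)) ->
  0 < tauD -> 0 < N0 -> 0 < lam ->
  exists g0, 0 < g0 /\
    forall g, g0 <= g ->
      exists c, 0 < c /\
        forall (sigma : R -> nat) (x : R -> nat -> R),
          switching_signal p sigma ->
          in_Save tauD N0 sigma ->
          is_solution n (fun t i j => N i j + g * M (sigma t) i j) x ->
          forall t, 0 <= t ->
            vnorm n (x t) <= c * exp (- (lam * t)) * vnorm n (x 0).
Proof.
  intros Hst HtauD HN0 Hlam.
  destruct (exp_stable_uniform n p M Hst) as [a [C [Ha [HC Hs]]]].
  assert (HlnC : 0 <= ln C) by (rewrite <- ln_1; apply ln_le; lra).
  assert (Hq : 0 <= ln C / tauD) by (apply Rdiv_le_0_compat; auto).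
  pose proof (mnorm_nonneg n N).
  set (g1 := (lam + C * mnorm n N + ln C / tauD) / a).
  assert (Hg1 : 0 <= g1) by (apply Rdiv_le_0_compat; nra).
  exists (g1 + 1). split; [lra|]. intros g Hg.
  pose proof (exp_pos (ln C * (N0 + 1 / tauD))). set (K := exp (ln C * (N0 + 1 / tauD))) in *.
  exists (C * K). split; [nra|]. intros sigma x Hsw Hsave Hx t Ht.
  destruct (switched_solution_bound n p M N a C g sigma x Hs Ha HC ltac:(lra) Hsw Hx t Ht)
    as [l [Hnd [Hl Hb]]].
  assert (Hm : INR (length l) <= N0 + (t + 1) / tauD).
  { replace (t + 1) with (t + 1 - 0) by ring.
    apply (Hsave 0 (t + 1)); [lra|lra|auto|]. intros s Hsl. destruct (Hl s Hsl). split; auto; lra. }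
  assert (Hrate : lam <= switched_rate n N a C g - ln C / tauD).
  { unfold switched_rate. assert (a * g1 = lam + C * mnorm n N + ln C / tauD) by (unfold g1; field; lra).
    nra. }
  pose proof (switch_cost_le C (length l) tauD N0 _ lam t HC HtauD Ht Hm Hrate).
  pose proof (vnorm_nonneg n (x 0)).
  eapply Rle_trans; [apply Hb|]. fold K in H1.
  replace (C * K * exp (- (lam * t)) * vnorm n (x 0)) with (K * exp (- (lam * t)) * (C * vnorm n (x 0))) by ring.
  apply Rmult_le_compat_r; nra.
Qed.
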